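(* Let $\phi$ be a singular-expansive flow of a compact metric space $X$. Then for every compact invariant set $\Lambda\subset X$ with $\Lambda\cap Sing(\phi)=\emptyset$, the restricted flow $\phi|_\Lambda$ is expansive.
   Context: A flow is a continuous $\phi:\mathbb{R}\times X\to X$ with $\phi_0=\mathrm{id}$, $\phi_{t+s}=\phi_t\circ\phi_s$; $\phi_I(x)=\{\phi_t(x):t\in I\}$; $Sing(\phi)$ is the set of fixed points; $dist(z,A)=\inf_{a\in A}d(z,a)$, with $dist(z,\emptyset)=diam(X)$; $\Lambda$ invariant means $\phi_t(\Lambda)=\Lambda$ for all $t$. $\phi$ is singular-expansive if for every $\epsilon>0$ there is $\delta>0$ such that whenever $x,y\in X$ and an increasing homeomorphism $s:\mathbb{R}\to\mathbb{R}$ satisfy $d(\phi_t(x),\phi_{s(t)}(y))\le\delta\,dist(\phi_t(x),Sing(\phi))$ for all $t$, then $\phi_{s(t_0)}(y)\in\phi_{[t_0-\epsilon,t_0+\epsilon]}(x)$ for some $t_0\in\mathbb{R}$. A flow $\psi$ on a compact metric space $Y$ is expansive if for every $\epsilon>0$ there is $\delta>0$ such that whenever $x,y\in Y$ and a continuous $s:\mathbb{R}\to\mathbb{R}$ with $s(0)=0$ satisfy $d(\psi_t(x),\psi_{s(t)}(y))\le\delta$ for all $t$, then $y\in\psi_{[-\epsilon,\epsilon]}(x)$. *)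

From HB Require Import structures.
From mathcomp Require Import all_boot all_order all_algebra.
From mathcomp Require Import all_classical all_reals all_analysis.
From Stdlib Require List.
Set Implicit Arguments. Unset Strict Implicit. Unset Printing Implicit Defensive.
Import Order.TTheory GRing.Theory Num.Theory.
Import numFieldNormedType.Exports.
Local Open Scope classical_set_scope.
Local Open Scope ring_scope.

Section Defs.
Variable R : realType.

Definition is_metric (X : Type) (d : X -> X -> R) : Prop :=
  (forall x y, 0 <= d x y) /\
  (forall x y, d x y = 0 <-> x = y) /\
  (forall x y, d x y = d y x) /\
  (forall x y z, d x z <= d x y + d y z).

Definition mopen (X : Type) (d : X -> X -> R) (U : set X) : Prop :=
  forall x, U x -> exists r, 0 < r /\ forall y, d x y < r -> U y.

Definition mcompact (X : Type) (d : X -> X -> R) (K : set X) : Prop :=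
  forall (I : Type) (U : I -> set X),
    (forall i, mopen d (U i)) ->
    (forall x, K x -> exists i, U i x) ->
    exists l : seq I, forall x, K x -> exists i, List.In i l /\ U i x.

Definition compact_metric_space (X : Type) (d : X -> X -> R) : Prop :=
  is_metric d /\ mcompact d setT.

Definition is_flow (X : Type) (d : X -> X -> R) (phi : R -> X -> X) : Prop :=
  (forall (t : R) (x : X) (e : R), 0 < e -> exists del : R, 0 < del /\
     forall (s : R) (y : X), `|s - t| < del -> d x y < del ->
       d (phi t x) (phi s y) < e) /\
  (forall x, phi 0 x = x) /\
  (forall t s x, phi (t + s) x = phi t (phi s x)).

Definition Sing (X : Type) (phi : R -> X -> X) : set X :=
  [set x | forall t, phi t x = x].

Definition diam (X : Type) (d : X -> X -> R) : R :=
  sup [set r | exists x y, r = d x y].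

Definition dist (X : Type) (d : X -> X -> R) (z : X) (A : set X) : R :=
  if pselect (exists a, A a) then inf [set r | exists a, A a /\ r = d z a]
  else diam d.

Definition orbit_seg (X : Type) (phi : R -> X -> X) (a b : R) (x : X) : set X :=
  [set z | exists t, a <= t /\ t <= b /\ z = phi t x].

Definition increasing_homeo (s : R -> R) : Prop :=
  (exists g : R -> R, cancel s g /\ cancel g s /\ continuous s /\ continuous g) /\
  (forall a b, a < b -> s a < s b).

Definition singular_expansive (X : Type) (d : X -> X -> R) (phi : R -> X -> X) : Prop :=
  forall e : R, 0 < e -> exists del : R, 0 < del /\
    forall (x y : X) (s : R -> R), increasing_homeo s ->
      (forall t, d (phi t x) (phi (s t) y) <= del * dist d (phi t x) (Sing phi)) ->
      exists t0, orbit_seg phi (t0 - e) (t0 + e) x (phi (s t0) y).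

Definition expansive (Y : Type) (dY : Y -> Y -> R) (psi : R -> Y -> Y) : Prop :=
  forall e : R, 0 < e -> exists del : R, 0 < del /\
    forall (x y : Y) (s : R -> R), continuous s -> s 0 = 0 ->
      (forall t, dY (psi t x) (psi (s t) y) <= del) ->
      orbit_seg psi (- e) e x y.

Definition flow_invariant (X : Type) (phi : R -> X -> X) (L : set X) : Prop :=
  forall t, phi t @` L = L.

Lemma invariant_fwd (X : Type) (phi : R -> X -> X) (L : set X) :
  flow_invariant phi L -> forall t x, L x -> L (phi t x).
Proof. by move=> H t x Lx; rewrite -(H t); exists x. Qed.

Definition sub_dist (X : Type) (d : X -> X -> R) (L : set X) (a b : {x : X | L x}) : R :=
  d (proj1_sig a) (proj1_sig b).

Definition restrict_flow (X : Type) (phi : R -> X -> X) (L : set X)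
  (HL : flow_invariant phi L) (t : R) (a : {x : X | L x}) : {x : X | L x} :=
  exist L (phi t (proj1_sig a)) (invariant_fwd HL t (proj2_sig a)).

End Defs.

(* On the compact set L, which avoids Sing, the distance to Sing is bounded
   below by some c > 0, so the tolerance δ·dist(·, Sing) of singular
   expansivity is at least δc along orbits in L.  Given a continuous
   reparametrization s with d(φ_t x, φ_{s(t)} y) small, the absence of short
   periods on L and uniform continuity force s to be close to a translation on
   every unit interval; interpolating s linearly between the integers yields an
   increasing homeomorphism s' uniformly close to s, to which singular
   expansivity applies and gives y = φ_r x.  Finally t ↦ s(t) + r - t is a
   continuous time shift between φ_t x and φ_{s(t)} y which is small at one
   time; for A below the shortest period on L, φ_{±A} moves every point of L
   by a definite amount, so the shift never reaches ±A, and at t = 0 this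
   bounds |r|. *)

From HB Require Import structures.
From mathcomp Require Import all_boot all_order all_algebra.
From mathcomp Require Import all_classical all_reals all_analysis.
From mathcomp Require Import ring lra.
Set Implicit Arguments. Unset Strict Implicit. Unset Printing Implicit Defensive.
Import Order.TTheory GRing.Theory Num.Theory.
Import numFieldNormedType.Exports.
Local Open Scope classical_set_scope.
Local Open Scope ring_scope.

Section RealReparametrizations.
Variable R : realType.
Implicit Types (f g s : R -> R) (a t : R).

Lemma lipschitz_continuous f (k : R) : 0 < k ->
  (forall x y, `|f x - f y| <= k * `|x - y|) -> continuous f.
Proof.
move=> k_gt0 f_lip x; apply/cvgrPdist_lt => e e_gt0.
apply/nbhs_ballP; exists (e / k) => [|y]; first by rewrite /= divr_gt0.
rewrite /ball /= => xy; apply: le_lt_trans (f_lip x y) _.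
by rewrite mulrC -ltr_pdivlMr.
Qed.

Lemma bilipschitz_increasing_homeo f c1 c2 : 0 < c1 -> 0 < c2 ->
  (forall t1 t2, t1 <= t2 -> c1 * (t2 - t1) <= f t2 - f t1 <= c2 * (t2 - t1)) ->
  increasing_homeo f.
Proof.
move=> c1_gt0 c2_gt0 f_incr.
have f_dist x y : c1 * `|x - y| <= `|f x - f y| <= c2 * `|x - y|.
  wlog xy : x y / x <= y => [hw|].
    case: (leP x y) => [xy|/ltW yx]; first exact: hw.
    by rewrite distrC (distrC (f x)); apply: hw.
  have /andP[lo hi] := f_incr x y xy.
  have c1_ge0 : 0 <= c1 * (y - x) by rewrite mulr_ge0 ?subr_ge0 // ltW.
  rewrite distrC (distrC (f x)) !ger0_norm ?subr_ge0 ?lo ?hi //; lra.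
have f_cont : continuous f.
  by apply: (lipschitz_continuous c2_gt0) => x y; case/andP: (f_dist x y).
have f_surj y : exists t, f t = y.
  pose T := `|y - f 0| / c1.
  have cT : c1 * T = `|y - f 0| by rewrite mulrC divfK ?gt_eqF.
  have T_ge0 : 0 <= T by rewrite divr_ge0 // ltW.
  have /andP[hi _] := f_incr 0 T T_ge0.
  have /andP[lo _] := f_incr (- T) 0 ltac:(by rewrite oppr_le0).
  rewrite subr0 cT in hi; rewrite sub0r opprK cT in lo.
  have n1 := ler_norm (y - f 0); have n2 := ler_norm (f 0 - y); rewrite distrC in n2.
  have [t _ <-] : exists2 t, t \in `[- T, T] & f t = y.
    apply: IVT; [lra | exact: continuous_subspaceT |].
    have fT : f (- T) <= f T by lra.
    by rewrite (min_idPl fT) (max_idPr fT); apply/andP; split; lra.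
  by exists t.
have f_lt a b : a < b -> f a < f b.
  move=> ab; have /andP[+ _] := f_incr a b (ltW ab).
  have : 0 < c1 * (b - a) by rewrite mulr_gt0 // subr_gt0.
  lra.
have f_inj : injective f.
  move=> a b fab; apply/eqP; rewrite eq_le !leNgt.
  by apply/andP; split; apply/negP => /f_lt; rewrite fab ltxx.
pose g y := projT1 (cid (f_surj y)).
have fK : cancel g f by move=> y; rewrite /g; case: cid.
have gK : cancel f g by move=> t; apply: f_inj; rewrite fK.
split=> //; exists g; do !split=> //.
apply: (@lipschitz_continuous g c1^-1); first by rewrite invr_gt0.
move=> x y; rewrite -{2}(fK x) -{2}(fK y).
have /andP[lo _] := f_dist (g x) (g y).
by rewrite mulrC ler_pdivlMr // mulrC.
Qed.

Definition pl_interp s t : R :=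
  s (Num.floor t)%:~R
  + (t - (Num.floor t)%:~R) * (s ((Num.floor t)%:~R + 1) - s (Num.floor t)%:~R).

Lemma pl_interp_unit s (k : int) t : k%:~R <= t <= k%:~R + 1 ->
  pl_interp s t = s k%:~R + (t - k%:~R) * (s (k%:~R + 1) - s k%:~R).
Proof.
case/andP=> kt tk1; rewrite /pl_interp.
have [tk1'|k1t] := ltP t (k%:~R + 1).
  by suff -> : Num.floor t = k by []; apply: floor_def; rewrite kt intrD tk1'.
have -> : t = (k + 1)%:~R by rewrite intrD; apply/eqP; rewrite eq_le tk1 k1t.
rewrite intrKfloor !intrD subrr mul0r addr0 -[1%:~R]/(1 : R).
by rewrite addrAC subrr add0r mul1r addrCA subrr addr0.
Qed.

Lemma pl_interp_incr s c1 c2 :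
  (forall k : int, c1 <= s (k%:~R + 1) - s k%:~R <= c2) ->
  forall t1 t2, t1 <= t2 ->
  c1 * (t2 - t1) <= pl_interp s t2 - pl_interp s t1 <= c2 * (t2 - t1).
Proof.
move=> slope.
have unit_incr (k : int) t1 t2 : k%:~R <= t1 -> t1 <= t2 -> t2 <= k%:~R + 1 ->
    c1 * (t2 - t1) <= pl_interp s t2 - pl_interp s t1 <= c2 * (t2 - t1).
  move=> kt1 t12 t2k; rewrite !(pl_interp_unit s (k := k)) ?kt1 ?t2k ?(le_trans kt1 t12) //;
    last by rewrite (le_trans t12 t2k).
  have -> : forall a b m : R, a + (t2 - b) * m - (a + (t1 - b) * m) = (t2 - t1) * m.
    by move=> a b m; ring.
  have t12' : 0 <= t2 - t1 by rewrite subr_ge0.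
  by have /andP[lo hi] := slope k; rewrite !(mulrC (t2 - t1)) !ler_wpM2r.
have n_units (n : nat) t1 t2 : t1 <= t2 -> t2 <= (Num.floor t1)%:~R + n%:R ->
    c1 * (t2 - t1) <= pl_interp s t2 - pl_interp s t1 <= c2 * (t2 - t1).
  elim: n t1 t2 => [|n IH] t1 t2 t12.
    rewrite addr0 => t2k; have -> : t2 = t1 by apply/eqP; rewrite eq_le t12 (le_trans t2k (floor_le t1)).
    by rewrite !subrr !mulr0 lexx.
  set k := Num.floor t1 => t2k.
  have kt1 : k%:~R <= t1 := floor_le t1.
  have t1k : t1 < k%:~R + 1 by rewrite -(intrD _ k 1) floorD1_gt.
  have [t2k1|k1t2] := leP t2 (k%:~R + 1); first exact: (unit_incr k).
  have /andP[lo1 hi1] := unit_incr k t1 (k%:~R + 1) kt1 (ltW t1k) (lexx _).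
  have /andP[lo2 hi2] : c1 * (t2 - (k%:~R + 1)) <= pl_interp s t2 - pl_interp s (k%:~R + 1)
      <= c2 * (t2 - (k%:~R + 1)).
    apply: IH; first exact: ltW.
    rewrite -(intrD _ k 1) intrKfloor intrD -[1%:~R]/(1 : R).
    by rewrite -natr1 in t2k; lra.
  by apply/andP; split; lra.
move=> t1 t2 t12; apply: (n_units (Num.truncn (t2 - (Num.floor t1)%:~R)).+1) => //.
by have := @real_truncnS_gt _ (t2 - (Num.floor t1)%:~R) (num_real _); lra.
Qed.

Lemma pl_interp_close s a :
  (forall (k : int) tau, 0 <= tau <= 1 -> `|s (k%:~R + tau) - s k%:~R - tau| < a) ->
  forall t, `|pl_interp s t - s t| < 2 * a.
Proof.
move=> s_near t; set k := Num.floor t; set tau := t - k%:~R.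
have kt : k%:~R <= t := floor_le t.
have tk : t < k%:~R + 1 by rewrite -(intrD _ k 1) floorD1_gt.
have tau01 : 0 <= tau <= 1 by apply/andP; split; rewrite /tau; lra.
have /ltr_normlP[slo shi] := s_near k 1 ltac:(by rewrite ler01 lexx).
have /ltr_normlP[tlo thi] := s_near k tau tau01.
rewrite (pl_interp_unit s (k := k)) ?kt ?(ltW tk) // -/tau.
have -> : t = k%:~R + tau by rewrite /tau addrC subrK.
have /andP[tau0 tau1] := tau01.
have : 0 <= tau * (a - (s (k%:~R + 1) - s k%:~R - 1)) by rewrite mulr_ge0 // subr_ge0 ltW.
have : 0 <= tau * (a + (s (k%:~R + 1) - s k%:~R - 1)) by rewrite mulr_ge0 //; lra.
by rewrite ltr_norml; move=> *; apply/andP; split; nra.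
Qed.

Lemma near_translation_increasing_homeo s a : a < 1 ->
  (forall (k : int) tau, 0 <= tau <= 1 -> `|s (k%:~R + tau) - s k%:~R - tau| < a) ->
  exists2 s', increasing_homeo s' & forall t, `|s' t - s t| < 2 * a.
Proof.
move=> a_lt1 s_near; exists (pl_interp s); last exact: pl_interp_close.
apply: (@bilipschitz_increasing_homeo _ (1 - a) (1 + a)).
- by rewrite subr_gt0.
- by have := le_lt_trans (normr_ge0 _) (s_near 0 0 ltac:(by rewrite lexx ler01)); lra.
apply: pl_interp_incr => k.
have /ltr_normlP[lo hi] := s_near k 1 ltac:(by rewrite ler01 lexx).
by apply/andP; split; lra.
Qed.

Lemma ivt_norm f (A t0 t1 : R) : continuous f -> `|f t0| < A -> A <= `|f t1| ->
  exists2 t, Num.min t0 t1 <= t <= Num.max t0 t1 & `|f t| = A.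
Proof.
move=> f_cont f0 f1.
have nf_cont : continuous (fun t => `|f t|).
  by move=> t; apply: continuous_comp; [exact: f_cont | exact: norm_continuous].
have ivt u v : u <= v -> Num.min `|f u| `|f v| <= A <= Num.max `|f u| `|f v| ->
    exists2 t, u <= t <= v & `|f t| = A.
  by move=> uv /(IVT uv (continuous_subspaceT nf_cont))[t]; rewrite in_itv; exists t.
have A_between : Num.min `|f t0| `|f t1| <= A <= Num.max `|f t0| `|f t1|.
  by rewrite ge_min le_max (ltW f0) f1 orbT.
have [t01|/ltW t10] := leP t0 t1; first exact: ivt.
by apply: ivt; rewrite // minC maxC.
Qed.

End RealReparametrizations.

Section FiniteBounds.
Variables (R : realType) (I : Type).

Lemma In_ub (f : I -> R) (l : seq I) : exists M, forall i, List.In i l -> f i <= M.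
Proof.
elim: l => [|j l [M ubM]]; first by exists 0.
by exists (Num.max (f j) M) => i /= [<-|/ubM fiM]; rewrite le_max ?lexx ?fiM ?orbT.
Qed.

Lemma In_lb_gt0 (f : I -> R) (l : seq I) : (forall i, 0 < f i) ->
  exists2 m : R, 0 < m & forall i, List.In i l -> m <= f i.
Proof.
move=> f_gt0; elim: l => [|j l [m m_gt0 lbm]]; first by exists 1.
exists (Num.min (f j) m) => [|i /= [<-|/lbm mfi]]; by rewrite ?lt_min ?f_gt0 ?ge_min ?lexx ?mfi ?orbT.
Qed.

End FiniteBounds.

Section FlowOnCompactSet.
Variables (R : realType) (X : Type) (d : X -> X -> R) (phi : R -> X -> X).
Hypotheses (d_metric : is_metric d) (phi_flow : is_flow d phi).
Variable L : set X.
Hypothesis L_compact : mcompact d L.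
Implicit Types (a b c del eta e r rho t tau u v : R) (p q w x y z : X).

Lemma d_ge0 x y : 0 <= d x y. Proof. by case: d_metric. Qed.
Lemma d_eq0 x y : d x y = 0 <-> x = y. Proof. by case: d_metric => _ []. Qed.
Lemma dxx x : d x x = 0. Proof. exact/d_eq0. Qed.
Lemma d_sym x y : d x y = d y x. Proof. by case: d_metric => _ [_ []]. Qed.
Lemma d_triangle x y z : d x z <= d x y + d y z. Proof. by case: d_metric => _ [_ []]. Qed.

Lemma d_gt0 x y : x <> y -> 0 < d x y.
Proof. by move=> xy; rewrite lt_neqAle d_ge0 andbT eq_sym; apply/eqP => /d_eq0. Qed.

Lemma lebesgue_number (G : X -> R -> Prop) :
  (forall z, L z -> exists2 r, 0 < r & G z r) ->
  exists2 r0 : R, 0 < r0 &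
    forall w, L w -> exists z r, [/\ G z r, d z w < r / 2 & r0 <= r / 2].
Proof.
move=> G_pos.
have rP (i : {z | L z}) : {r | 0 < r & G (sval i) r} by apply: cid2; apply: G_pos; case: i.
pose rf i := s2val (rP i).
have rf_gt0 i : 0 < rf i / 2 by rewrite divr_gt0 // /rf; case: (rP i).
pose U i := [set w | d (sval i) w < rf i / 2].
have [i w Uw|w Lw|l Ul] := L_compact (U := U).
- exists (rf i / 2 - d (sval i) w); split; first by rewrite subr_gt0.
  by move=> y wy; rewrite /U /=; have := d_triangle (sval i) w y; lra.
- by exists (exist _ w Lw); rewrite /U /= dxx.
have [r0 r0_gt0 lb_r0] := In_lb_gt0 l rf_gt0.
exists r0 => // w /Ul[i [il Uiw]].
by exists (sval i), (rf i); split; rewrite ?lb_r0 // /rf; case: (rP i).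
Qed.

Lemma mcompact_bounded : mcompact d setT -> exists M, forall x y, d x y <= M.
Proof.
move=> X_compact; have [[x0 _]|noX] := pselect (exists x : X, True); last first.
  by exists 0 => x; case: noX; exists x.
have [i w iw|w _|l Ul] := X_compact _ (fun i => [set w | d i w < 1]).
- exists (1 - d i w); split; first by rewrite subr_gt0.
  by move=> y wy /=; have := d_triangle i w y; lra.
- by exists w; rewrite /= dxx.
have [M ubM] := In_ub (fun i => d i x0) l.
have near_x0 w : d w x0 <= 1 + M.
  have [i [/ubM ix0 /= wi]] := Ul w I.
  by have := d_triangle w i x0; rewrite d_sym in wi; lra.
exists (2 * (1 + M)) => x y.
by have := d_triangle x x0 y; have := near_x0 x; have := near_x0 y; rewrite (d_sym x0 y); lra.
Qed.

Lemma flow_continuous t x e : 0 < e -> exists2 del : R, 0 < del &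
  forall s y, `|s - t| < del -> d x y < del -> d (phi t x) (phi s y) < e.
Proof. by case: phi_flow => + _ e_gt0 => /(_ t x e e_gt0)[del []]; exists del. Qed.
Lemma flow0 x : phi 0 x = x. Proof. by case: phi_flow => _ []. Qed.
Lemma flowD t s x : phi (t + s) x = phi t (phi s x). Proof. by case: phi_flow => _ []. Qed.
Lemma flowNK t x : phi (- t) (phi t x) = x. Proof. by rewrite -flowD addNr flow0. Qed.
Lemma flowKN t x : phi t (phi (- t) x) = x. Proof. by rewrite -flowD subrr flow0. Qed.

Lemma flow_small_displacement eta : 0 < eta -> exists2 c : R, 0 < c &
  forall w v, L w -> `|v| < c -> d w (phi v w) < eta.
Proof.
move=> eta_gt0.
have [|r0 r0_gt0 lb_r0] := lebesgue_number (G := fun z r =>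
    forall w v, d z w < r -> `|v| < r -> d z (phi v w) < eta / 2 /\ d z w < eta / 2).
  move=> z Lz; have [del del_gt0 phi_del] := @flow_continuous 0 z (eta / 4) ltac:(lra).
  exists (Num.min del (eta / 4)) => [|w v]; first by rewrite lt_min del_gt0 /=; lra.
  rewrite !lt_min => /andP[zw1 zw2] /andP[v1 _].
  by split; last lra; have := phi_del v w; rewrite flow0 subr0 => /(_ v1 zw1); lra.
exists r0 => // w v Lw v_lt.
have [z [r [near_z zw r0r]]] := lb_r0 w Lw.
have [] := near_z w v ltac:(lra) ltac:(lra).
by have := d_triangle w z (phi v w); rewrite (d_sym w z); lra.
Qed.

Lemma flow_uniform_continuous c eta : 0 < eta -> exists2 rho : R, 0 < rho &
  forall p q, L p -> d p q < rho -> d (phi c p) (phi c q) < eta.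
Proof.
move=> eta_gt0.
have [|r0 r0_gt0 lb_r0] := lebesgue_number (G := fun z r =>
    forall w, d z w < r -> d (phi c z) (phi c w) < eta / 2).
  move=> z Lz; have [del del_gt0 phi_del] := @flow_continuous c z (eta / 2) ltac:(lra).
  by exists del => // w zw; apply: phi_del; rewrite ?subrr ?normr0.
exists r0 => // p q Lp pq.
have [z [r [near_z zp r0r]]] := lb_r0 p Lp.
have := near_z p ltac:(lra); have := near_z q ltac:(have := d_triangle z p q; lra).
by have := d_triangle (phi c p) (phi c z) (phi c q); rewrite (d_sym (phi c p) (phi c z)); lra.
Qed.

Lemma displacement_lb u : (forall w, L w -> phi u w <> w) -> exists2 b : R, 0 < b &
  forall w, L w -> b <= d w (phi u w).
Proof.
move=> no_fix.
have [|r0 r0_gt0 lb_r0] := lebesgue_number (G := fun z r =>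
    forall w, d z w < r -> r <= d w (phi u w)).
  move=> z Lz; have D_gt0 := d_gt0 (nesym (no_fix z Lz)).
  set D := d z (phi u z) in D_gt0.
  have [del del_gt0 phi_del] := @flow_continuous u z (D / 4) ltac:(lra).
  exists (Num.min del (D / 4)) => [|w]; first by rewrite lt_min del_gt0 /=; lra.
  have : Num.min del (D / 4) <= D / 4 by rewrite ge_min lexx orbT.
  rewrite lt_min => ? /andP[zw1 zw2].
  have := phi_del u w ltac:(by rewrite subrr normr0) zw1.
  have := d_triangle z w (phi u z); have := d_triangle w (phi u w) (phi u z).
  by rewrite (d_sym (phi u w)) -/D; lra.
exists r0 => // w Lw.
by have [z [r [near_z zw r0r]]] := lb_r0 w Lw; have := near_z w ltac:(lra); lra.
Qed.

Hypothesis L_invariant : forall t x, L x -> L (phi t x).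

Lemma flow_uniform_continuous_unit eta : 0 < eta -> exists2 rho : R, 0 < rho &
  forall p q tau, L p -> L q -> 0 <= tau <= 1 -> d p q < rho -> d (phi tau p) (phi tau q) < eta.
Proof.
move=> eta_gt0.
have [c c_gt0 disp_c] := @flow_small_displacement (eta / 3) ltac:(lra).
have steps (n : nat) : exists2 rho : R, 0 < rho & forall p q tau, L p -> L q ->
    0 <= tau <= n%:R * c -> d p q < rho -> d (phi tau p) (phi tau q) < eta.
  elim: n => [|n [rho rho_gt0 IH]].
    exists eta => // p q tau _ _; rewrite mul0r => /andP[tau_ge0 tau_le0].
    have -> : tau = 0 by apply/eqP; rewrite eq_le tau_ge0 tau_le0.
    by rewrite !flow0.
  have [rho' rho'_gt0 uc_c] := @flow_uniform_continuous c rho rho_gt0.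
  exists (Num.min (eta / 3) rho') => [|p q tau Lp Lq /andP[tau_ge0 tau_le]].
    by rewrite lt_min rho'_gt0 andbT; lra.
  rewrite lt_min => /andP[pq_eta pq_rho'].
  have [tau_c|c_tau] := ltP tau c.
    have := disp_c p tau Lp ltac:(by rewrite ger0_norm).
    have := disp_c q tau Lq ltac:(by rewrite ger0_norm).
    have := d_triangle (phi tau p) p (phi tau q); have := d_triangle p q (phi tau q).
    by rewrite (d_sym (phi tau p) p); lra.
  have -> : tau = (tau - c) + c by rewrite subrK.
  rewrite !(flowD (tau - c) c); apply: IH; try exact: L_invariant; last exact: uc_c.
  by rewrite subr_ge0 c_tau lerBlDr -[c in _ + c]mul1r -mulrDl natr1.
have [N N_ge] : exists N : nat, 1 <= N%:R * c.
  exists (Num.truncn c^-1).+1; rewrite -ler_pdivrMr // div1r ltW //.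
  exact/real_truncnS_gt/num_real.
have [rho rho_gt0 uc] := steps N; exists rho => // p q tau Lp Lq /andP[tau0 tau1].
by apply: uc; rewrite // tau0 (le_trans tau1).
Qed.

Lemma displacement_lbN u b : (forall w, L w -> b <= d w (phi u w)) ->
  forall w, L w -> b <= d w (phi (- u) w).
Proof.
by move=> gap w Lw; have := gap _ (L_invariant (- u) Lw); rewrite flowKN d_sym.
Qed.

Lemma shift_norm_lt_persists A b (p : R -> X) (g : R -> R) t0 t1 :
  (forall w, L w -> b <= d w (phi A w)) -> continuous g ->
  (forall t, Num.min t0 t1 <= t <= Num.max t0 t1 ->
    L (p t) /\ d (p t) (phi (g t) (p t)) < b) ->
  `|g t0| < A -> `|g t1| < A.
Proof.
move=> gap g_cont near_orbit g0; rewrite ltNge; apply/negP => g1.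
have [t /near_orbit[Lpt close] gtA] := ivt_norm g_cont g0 g1.
have [g_ge0|g_lt0] := leP 0 (g t).
  by rewrite ger0_norm // in gtA; rewrite gtA in close; have := gap _ Lpt; lra.
rewrite ltr0_norm // in gtA; rewrite -(opprK (g t)) gtA in close.
by have := displacement_lbN gap Lpt; lra.
Qed.

Hypothesis L_nonfixed : forall x, L x -> exists t, phi t x <> x.

Lemma flow_periodMn u w n : phi u w = w -> phi (u *+ n) w = w.
Proof. by move=> uw; elim: n => [|n IH]; rewrite ?mulr0n ?flow0 // mulrS flowD IH uw. Qed.

Lemma flow_periodMz u w (k : int) : phi u w = w -> phi (u *~ k) w = w.
Proof.
move=> uw; case: k => n; first by rewrite -pmulrn; apply: flow_periodMn.
by rewrite NegzE mulrNz -pmulrn -mulNrn; apply: flow_periodMn; rewrite -{1}uw flowNK.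
Qed.

Lemma no_small_periods : exists2 p0 : R, 0 < p0 &
  forall w u, L w -> 0 < u -> u <= p0 -> phi u w <> w.
Proof.
(* Near z, times of size at most r move points by less than K while tau moves
   them by at least K; a period u <= r would reduce tau modulo u to such a time. *)
have [|r0 r0_gt0 lb_r0] := lebesgue_number (G := fun z r => exists tau K, forall w,
    d z w < r -> (forall v, `|v| <= r -> d w (phi v w) < K) /\ K <= d w (phi tau w)).
  move=> z /L_nonfixed[tau /nesym/d_gt0 D_gt0].
  set D := d z (phi tau z) in D_gt0.
  have [del1 del1_gt0 phi_tau] := @flow_continuous tau z (D / 4) ltac:(lra).
  have [del2 del2_gt0 phi_0] := @flow_continuous 0 z (D / 4) ltac:(lra).
  pose r := Num.min (Num.min del1 (del2 / 2)) (D / 4).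
  have r_del1 : r <= del1 by rewrite /r !ge_min lexx.
  have r_del2 : r <= del2 / 2 by rewrite /r !ge_min lexx orbT.
  have r_D : r <= D / 4 by rewrite /r !ge_min lexx orbT.
  exists r; first by rewrite /r !lt_min del1_gt0 /=; lra.
  exists tau, (D / 2) => w zw; split=> [v v_le|].
    have := phi_0 v w ltac:(rewrite subr0; lra) ltac:(lra).
    by rewrite flow0 => ?; have := d_triangle w z (phi v w); rewrite (d_sym w z); lra.
  have := phi_tau tau w ltac:(by rewrite subrr normr0) ltac:(lra).
  have := d_triangle z w (phi tau z); have := d_triangle w (phi tau w) (phi tau z).
  by rewrite (d_sym (phi tau w)) -/D; lra.
exists r0 => // w u Lw u_gt0 u_le period.
have [z [r [[tau [K near_z]] zw r0r]]] := lb_r0 w Lw.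
have [small_moves tau_moves] := near_z w ltac:(lra).
pose k := Num.floor (tau / u).
have ku_le : k%:~R * u <= tau by rewrite -ler_pdivlMr // floor_le.
have ku_gt : tau < k%:~R * u + u.
  by have := floorD1_gt (tau / u); rewrite ltr_pdivrMr // intrD mulrDl mul1r.
have tau_red : phi tau w = phi (tau - k%:~R * u) w.
  by rewrite -{2}(flow_periodMz k period) -flowD -(mulrzl u) subrK.
have := small_moves (tau - k%:~R * u) ltac:(rewrite ger0_norm; lra).
by rewrite -tau_red; lra.
Qed.

Lemma Sing_bounded_away z : (exists t, phi t z <> z) ->
  exists2 r : R, 0 < r & forall y, Sing phi y -> r <= d z y.
Proof.
move=> [tau /nesym/d_gt0 D_gt0]; set D := d z (phi tau z) in D_gt0.
have [del del_gt0 phi_tau] := @flow_continuous tau z (D / 2) ltac:(lra).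
exists (Num.min del (D / 2)) => [|y Sy]; first by rewrite lt_min del_gt0 /=; lra.
rewrite leNgt lt_min; apply/negP => /andP[zy_del zy_D].
have := phi_tau tau y ltac:(by rewrite subrr normr0) zy_del; rewrite Sy.
by have := d_triangle z y (phi tau z); rewrite (d_sym y) -/D; lra.
Qed.

Lemma dist_Sing_lb : mcompact d setT -> (exists z, L z) ->
  exists2 c : R, 0 < c & forall z, L z -> c <= dist d z (Sing phi).
Proof.
move=> X_compact [z0 Lz0]; rewrite /dist; case: pselect => [[y0 Sy0]|?].
  have [|r0 r0_gt0 lb_r0] := lebesgue_number (G := fun z r =>
      forall y, Sing phi y -> r <= d z y).
    by move=> z /L_nonfixed; apply: Sing_bounded_away.
  exists r0 => // z Lz; apply: lb_le_inf; first by exists (d z y0), y0.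
  move=> _ [y [Sy ->]]; have [w [r [far_w wz r0r]]] := lb_r0 z Lz.
  by have := far_w y Sy; have := d_triangle w z y; lra.
have [tau /nesym/d_gt0 D_gt0] := L_nonfixed Lz0.
have [M ubM] := mcompact_bounded X_compact.
exists (d z0 (phi tau z0)) => // z _; apply: ub_le_sup; last by exists z0, (phi tau z0).
by exists M => _ [x [x' ->]].
Qed.

Lemma reparametrization_near_translation a : 0 < a -> exists2 del : R, 0 < del &
  forall x y (s : R -> R), L x -> L y -> continuous s ->
  (forall t, d (phi t x) (phi (s t) y) <= del) ->
  forall t tau, 0 <= tau <= 1 -> `|s (t + tau) - s t - tau| < a.
Proof.
move=> a_gt0; have [p0 p0_gt0 no_per] := no_small_periods.
pose a' := Num.min a p0.
have a'_gt0 : 0 < a' by rewrite lt_min a_gt0.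
have [b b_gt0 gap_b] := @displacement_lb a'
  (fun w Lw => no_per w a' Lw a'_gt0 ltac:(by rewrite ge_min lexx orbT)).
have [rho rho_gt0 uc] := @flow_uniform_continuous_unit (b / 2) ltac:(lra).
pose del := Num.min (b / 4) (rho / 2).
have del_b : del <= b / 4 by rewrite ge_min lexx.
have del_rho : del <= rho / 2 by rewrite ge_min lexx orbT.
exists del => [|x y s Lx Ly s_cont close t tau /andP[tau0 tau1]].
  by rewrite lt_min; apply/andP; split; lra.
suff : `|s (t + tau) - s t - tau| < a' by move/lt_le_trans; apply; rewrite ge_min lexx.
(* Both φ_{s(t)+v} y and φ_{s(t+v)} y shadow φ_{t+v} x, so the time shift between
   them, which vanishes at v = 0, never brings a point of L to its φ_{±a'}-image. *)
apply: (@shift_norm_lt_persists a' b (fun v => phi (s t + v) y)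
  (fun v => s (t + v) - s t - v) 0 tau gap_b); last by rewrite addr0 subr0 subrr normr0.
  move=> v; apply: cvgB; last exact: cvg_id.
  apply: cvgB; last exact: cvg_cst.
  by apply: continuous_comp; [apply: cvgD; [exact: cvg_cst | exact: cvg_id] | exact: s_cont].
rewrite (min_idPl tau0) (max_idPr tau0) => v /andP[v0 v1].
split; first exact: L_invariant.
have -> : phi (s (t + v) - s t - v) (phi (s t + v) y) = phi (s (t + v)) y.
  by rewrite -flowD; congr phi; ring.
have : d (phi (s t + v) y) (phi (t + v) x) < b / 2.
  rewrite (addrC (s t)) (addrC t) !flowD; apply: uc; try exact: L_invariant.
    by rewrite v0 (le_trans v1 tau1).
  by rewrite d_sym; have := close t; lra.
by have := close (t + v); have := d_triangle (phi (s t + v) y) (phi (t + v) x) (phi (s (t + v)) y); lra.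
Qed.

Lemma reparametrization_close_homeo a : 0 < a -> exists2 del : R, 0 < del &
  forall x y (s : R -> R), L x -> L y -> continuous s ->
  (forall t, d (phi t x) (phi (s t) y) <= del) ->
  exists2 s' : R -> R, increasing_homeo s' & forall t, `|s' t - s t| < a.
Proof.
move=> a_gt0; pose a' := Num.min (a / 2) (1 / 2).
have a'_a : 2 * a' <= a by rewrite -ler_pdivlMl // mulrC ge_min lexx.
have a'_lt1 : a' < 1 by rewrite gt_min; apply/orP; right; lra.
have [del del_gt0 near_transl] := @reparametrization_near_translation a'
  ltac:(by rewrite lt_min; apply/andP; split; lra).
exists del => // x y s Lx Ly s_cont close.
have [s' s'_homeo s's] := near_translation_increasing_homeo a'_lt1
  (fun k => near_transl x y s Lx Ly s_cont close k%:~R).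
by exists s' => // t; apply: lt_le_trans (s's t) a'_a.
Qed.

Lemma reparametrized_shadow_on_orbit : singular_expansive d phi -> mcompact d setT ->
  (exists z, L z) -> forall A, 0 < A -> exists2 del : R, 0 < del &
  forall x y (s : R -> R), L x -> L y -> continuous s ->
  (forall t, d (phi t x) (phi (s t) y) <= del) ->
  exists t0 r, y = phi r x /\ `|s t0 + r - t0| < A.
Proof.
move=> sexp X_compact L_ne A A_gt0.
have [d1 [d1_gt0 sexp_A]] := sexp (A / 2) ltac:(lra).
have [c c_gt0 sing_c] := dist_Sing_lb X_compact L_ne.
have d1c_gt0 : 0 < d1 * c / 2 by rewrite divr_gt0 ?mulr_gt0.
have [kap kap_gt0 disp_kap] := @flow_small_displacement (d1 * c / 2) d1c_gt0.
have [del0 del0_gt0 close_homeo] := @reparametrization_close_homeo (Num.min (A / 4) kap)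
  ltac:(by rewrite lt_min kap_gt0 andbT; lra).
pose del := Num.min del0 (d1 * c / 2).
have del_del0 : del <= del0 by rewrite ge_min lexx.
have del_d1c : del <= d1 * c / 2 by rewrite ge_min lexx orbT.
exists del => [|x y s Lx Ly s_cont close]; first by rewrite lt_min del0_gt0 d1c_gt0.
have [s' s'_homeo s's] := close_homeo x y s Lx Ly s_cont (fun t => le_trans (close t) del_del0).
have sexp_hyp t : d (phi t x) (phi (s' t) y) <= d1 * dist d (phi t x) (Sing phi).
  have s's_kap : `|s' t - s t| < kap by apply: lt_le_trans (s's t) _; rewrite ge_min lexx orbT.
  have := disp_kap _ _ (L_invariant (s t) Ly) s's_kap; rewrite -flowD subrK.
  have : d1 * c <= d1 * dist d (phi t x) (Sing phi).
    by rewrite ler_pM2l // sing_c //; exact: L_invariant.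
  have := close t; have := d_triangle (phi t x) (phi (s t) y) (phi (s' t) y); lra.
have [t0 [u [t0u1 [t0u2 yu]]]] := sexp_A x y s' s'_homeo sexp_hyp.
exists t0, (- s' t0 + u); split; first by rewrite flowD -yu flowNK.
have /ltr_normlP[? ?] : `|s' t0 - s t0| < A / 4.
  by apply: lt_le_trans (s's t0) _; rewrite ge_min lexx.
by rewrite ltr_norml; apply/andP; split; lra.
Qed.

Lemma singular_expansive_on_nonsingular_invariant :
  singular_expansive d phi -> mcompact d setT ->
  forall e, 0 < e -> exists2 del : R, 0 < del &
  forall x y (s : R -> R), L x -> L y -> continuous s -> s 0 = 0 ->
  (forall t, d (phi t x) (phi (s t) y) <= del) -> exists2 r : R, - e <= r <= e & y = phi r x.
Proof.
move=> sexp X_compact e e_gt0.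
have [L_ne|L0] := pselect (exists z, L z); last first.
  by exists 1 => // x y s Lx; case: L0; exists x.
have [p0 p0_gt0 no_per] := no_small_periods.
pose A := Num.min e p0.
have A_gt0 : 0 < A by rewrite lt_min e_gt0.
have A_p0 : A <= p0 by rewrite ge_min lexx orbT.
have [bA bA_gt0 gap_A] := @displacement_lb A (fun w Lw => no_per w A Lw A_gt0 A_p0).
have [del0 del0_gt0 shadow] := reparametrized_shadow_on_orbit sexp X_compact L_ne A_gt0.
exists (Num.min (bA / 2) del0) => [|x y s Lx Ly s_cont s0 close].
  by rewrite lt_min del0_gt0 andbT divr_gt0.
have close_bA t : d (phi t x) (phi (s t) y) < bA.
  by apply: le_lt_trans (close t) _; rewrite gt_min; apply/orP; left; lra.
have close_del0 t : d (phi t x) (phi (s t) y) <= del0.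
  by apply: le_trans (close t) _; rewrite ge_min lexx orbT.
have [t0 [r [y_r shift_t0]]] := shadow x y s Lx Ly s_cont close_del0.
have : `|s 0 + r - 0| < A.
  apply: (@shift_norm_lt_persists A bA (fun t => phi t x) (fun t => s t + r - t) t0 0 gap_A) => //.
    move=> t; apply: cvgB; [apply: cvgD; [exact: s_cont | exact: cvg_cst] | exact: cvg_id].
  by move=> t _; split; [exact: L_invariant | rewrite -flowD subrK flowD -y_r].
rewrite s0 add0r subr0 => /ltr_normlP[? ?]; exists r => //.
have A_e : A <= e by rewrite ge_min lexx.
by apply/andP; split; lra.
Qed.

End FlowOnCompactSet.

Theorem mainTheorem15 (R : realType) (X : Type) (d : X -> X -> R) (phi : R -> X -> X)
  (hX : compact_metric_space d) (hphi : is_flow d phi)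
  (hse : singular_expansive d phi)
  (L : set X) (hLc : mcompact d L) (hLinv : flow_invariant phi L)
  (hLsing : L `&` Sing phi = set0) :
  expansive (@sub_dist R X d L) (restrict_flow hLinv).
Proof.
have [d_metric X_compact] := hX.
have L_nonfixed x : L x -> exists t, phi t x <> x.
  move=> Lx; apply: contrapT => all_fixed.
  have : (L `&` Sing phi) x by split=> // t; apply: contrapT => ?; apply: all_fixed; exists t.
  by rewrite hLsing.
move=> e e_gt0.
have [del del_gt0 shadow] := singular_expansive_on_nonsingular_invariant d_metric hphi hLc
  (invariant_fwd hLinv) L_nonfixed hse X_compact e_gt0.
exists del; split=> // -[x Lx] [y Ly] s s_cont s0 close.
have [r /andP[r_ge r_le] y_r] := shadow x y s Lx Ly s_cont s0 close.
by exists r; do !split=> //; apply: eq_exist.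
Qed.
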